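(* Let $\mathcal{S}=(\mathscr{X},\nabla_{\mathcal{S}})$ and $\mathcal{T}=(\mathscr{Y},\nabla_{\mathcal{T}})$ be non-commutative spacetimes and let $f:\mathcal{S}\to\mathcal{T}$ be a geometric map that has a left adjoint $f_!:\mathscr{Y}\to\mathscr{X}$ (i.e. $f_!(y)\le x$ iff $y\le f(x)$). Then $f$ is logical if and only if $f_!(f(b)\otimes\nabla_{\mathcal{T}}a)=b\otimes\nabla_{\mathcal{S}}f_!(a)$ for all $a\in\mathscr{Y}$ and $b\in\mathscr{X}$.
   Context: A monoidal poset is a poset with a monoid structure whose multiplication is monotone in each argument. A quantale is a monoidal poset with all joins whose multiplication distributes over arbitrary joins in each argument. A monotone map between monoidal posets is oplax monoidal if $f(e)\le e$ and $f(a\otimes b)\le f(a)\otimes f(b)$, and strict monoidal if $f(e)=e$ and $f(a\otimes b)=f(a)\otimes f(b)$. A non-commutative spacetime is a pair $(\mathscr{X},\nabla)$ with $\mathscr{X}$ a quantale and $\nabla:\mathscr{X}\to\mathscr{X}$ join preserving and oplax monoidal. For such $\mathcal{S}$, $\nabla$ has a right adjoint $\Box$, and the implication of $\mathcal{S}$ is $a\to_{\mathcal{S}}b=\Box(a\Rightarrow b)$, where $\Rightarrow$ is the right adjoint of $a\otimes(-)$ in $\mathscr{X}$; equivalently $a\otimes\nabla b\le c$ iff $b\le a\to_{\mathcal{S}}c$. A geometric map $f:\mathcal{S}\to\mathcal{T}$ is a join-preserving strict monoidal map $f:\mathscr{X}\to\mathscr{Y}$ with $f\nabla_{\mathcal{S}}=\nabla_{\mathcal{T}}f$;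 it is logical if moreover $f(a\to_{\mathcal{S}}b)=f(a)\to_{\mathcal{T}}f(b)$ for all $a,b\in\mathscr{X}$. *)

Set Implicit Arguments.

Definition image {A B : Type} (f : A -> B) (P : A -> Prop) : B -> Prop :=
  fun y => exists x, P x /\ y = f x.

Record Quantale := {
  qcar :> Type;
  qle : qcar -> qcar -> Prop;
  qle_refl : forall x, qle x x;
  qle_trans : forall x y z, qle x y -> qle y z -> qle x z;
  qle_antisym : forall x y, qle x y -> qle y x -> x = y;
  qsup : (qcar -> Prop) -> qcar;
  qsup_ub : forall (S : qcar -> Prop) x, S x -> qle x (qsup S);
  qsup_least : forall (S : qcar -> Prop) u, (forall x, S x -> qle x u) -> qle (qsup S) u;
  qmul : qcar -> qcar -> qcar;
  qe : qcar;
  qmulA : forall a b c, qmul a (qmul b c) = qmul (qmul a b) c;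
  qmul1l : forall a, qmul qe a = a;
  qmul1r : forall a, qmul a qe = a;
  qmul_monol : forall a a' b, qle a a' -> qle (qmul a b) (qmul a' b);
  qmul_monor : forall a b b', qle b b' -> qle (qmul a b) (qmul a b');
  qmul_supl : forall (S : qcar -> Prop) b,
      qmul (qsup S) b = qsup (image (fun a => qmul a b) S);
  qmul_supr : forall a (S : qcar -> Prop),
      qmul a (qsup S) = qsup (image (fun b => qmul a b) S)
}.

Arguments qle {q}.
Arguments qsup {q}.
Arguments qmul {q}.
Arguments qe {q}.

Declare Scope quantale_scope.
Delimit Scope quantale_scope with Q.
Notation "x <=q y" := (qle x y) (at level 70) : quantale_scope.
Notation "x ** y" := (qmul x y) (at level 40, left associativity) : quantale_scope.
Open Scope quantale_scope.

Definition join_preserving {X Y : Quantale} (f : X -> Y) : Prop :=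
  forall S : X -> Prop, f (qsup S) = qsup (image f S).

Definition monotone {X Y : Quantale} (f : X -> Y) : Prop :=
  forall a b, a <=q b -> f a <=q f b.

Definition oplax_monoidal {X Y : Quantale} (f : X -> Y) : Prop :=
  monotone f /\ f qe <=q qe /\ forall a b, f (a ** b) <=q f a ** f b.

Definition strict_monoidal {X Y : Quantale} (f : X -> Y) : Prop :=
  monotone f /\ f qe = qe /\ forall a b, f (a ** b) = f a ** f b.

Record Spacetime := {
  sp_q :> Quantale;
  nabla : sp_q -> sp_q;
  nabla_join : join_preserving nabla;
  nabla_oplax : oplax_monoidal nabla
}.

Arguments nabla {s}.

(* Right adjoint of a*(-) in the quantale: a => b = sup {x | a*x <= b}. *)
Definition qimpl {X : Quantale} (a b : X) : X :=
  qsup (fun x => a ** x <=q b).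

(* Right adjoint Box of nabla: Box a = sup {x | nabla x <= a}. *)
Definition box {S : Spacetime} (a : S) : S :=
  qsup (fun x : S => nabla x <=q a).

Definition st_impl {S : Spacetime} (a b : S) : S := box (qimpl a b).

Definition geometric {S T : Spacetime} (f : S -> T) : Prop :=
  join_preserving f /\ strict_monoidal f /\
  forall x : S, f (nabla x) = nabla (f x).

Definition logical {S T : Spacetime} (f : S -> T) : Prop :=
  geometric f /\ forall a b : S, f (st_impl a b) = st_impl (f a) (f b).

Definition left_adjoint {S T : Spacetime} (g : T -> S) (f : S -> T) : Prop :=
  forall (y : T) (x : S), g y <=q x <-> y <=q f x.

(** Both sides of the identity are determined by their upper bounds, and
    the adjunctions [f_! -| f] and [b ** nabla (-) -| b ->_S (-)] give
    [f_!(f b ** nabla a) <= c  <->  a <= f b ->_T f c] and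
    [b ** nabla (f_! a) <= c  <->  a <= f (b ->_S c)].
    Hence the identity says exactly that [f (b ->_S c)] and [f b ->_T f c]
    have the same lower bounds, i.e. that [f] preserves implication. *)

From Stdlib Require Import Setoid.

Lemma qle_antisym_upper (X : Quantale) (x y : X) :
  (forall z : X, x <=q z <-> y <=q z) -> x = y.
Proof.
  intros Hxy. apply qle_antisym; apply Hxy, qle_refl.
Qed.

Lemma qle_antisym_lower (X : Quantale) (x y : X) :
  (forall z : X, z <=q x <-> z <=q y) -> x = y.
Proof.
  intros Hxy. apply qle_antisym; apply Hxy, qle_refl.
Qed.

Lemma join_preserving_adjoint (X Y : Quantale) (g : X -> Y) :
  monotone g -> join_preserving g ->
  forall (x : X) (y : Y), g x <=q y <-> x <=q qsup (fun z => g z <=q y).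
Proof.
  intros Hmono Hjoin x y. split; intros Hx.
  - apply qsup_ub. exact Hx.
  - apply qle_trans with (g (qsup (fun z => g z <=q y))).
    + apply Hmono. exact Hx.
    + rewrite Hjoin. apply qsup_least. intros w [z [Hz ->]]. exact Hz.
Qed.

Lemma qimpl_adjoint (X : Quantale) (a x b : X) :
  a ** x <=q b <-> x <=q qimpl a b.
Proof.
  apply (@join_preserving_adjoint X X (qmul a)).
  - intros y z. apply qmul_monor.
  - intros P. apply qmul_supr.
Qed.

Lemma box_adjoint (S : Spacetime) (x a : S) :
  nabla x <=q a <-> x <=q box a.
Proof.
  apply join_preserving_adjoint.
  - apply (nabla_oplax S).
  - apply nabla_join.
Qed.

Lemma st_impl_adjoint (S : Spacetime) (a b c : S) :
  a ** nabla b <=q c <-> b <=q st_impl a c.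
Proof.
  unfold st_impl. rewrite <- box_adjoint. apply qimpl_adjoint.
Qed.

Section MapWithLeftAdjoint.

Variables (S T : Spacetime) (f : S -> T) (f_shriek : T -> S).
Hypothesis f_shriek_adjoint : left_adjoint f_shriek f.

Definition preserves_st_impl : Prop :=
  forall a b : S, f (st_impl a b) = st_impl (f a) (f b).

Definition shriek_frobenius : Prop :=
  forall (a : T) (b : S), f_shriek (f b ** nabla a) = b ** nabla (f_shriek a).

Lemma shriek_le_iff (a : T) (b c : S) :
  f_shriek (f b ** nabla a) <=q c <-> a <=q st_impl (f b) (f c).
Proof.
  rewrite (f_shriek_adjoint _ c). apply st_impl_adjoint.
Qed.

Lemma shriek_frobenius_le_iff (a : T) (b c : S) :
  b ** nabla (f_shriek a) <=q c <-> a <=q f (st_impl b c).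
Proof.
  rewrite st_impl_adjoint. apply (f_shriek_adjoint a _).
Qed.

Lemma preserves_st_impl_shriek_frobenius :
  preserves_st_impl <-> shriek_frobenius.
Proof.
  split.
  - intros Himpl a b. apply qle_antisym_upper. intros c.
    rewrite shriek_le_iff, shriek_frobenius_le_iff, Himpl. reflexivity.
  - intros Hfrob b c. apply qle_antisym_lower. intros a.
    rewrite <- shriek_le_iff, <- shriek_frobenius_le_iff, Hfrob. reflexivity.
Qed.

End MapWithLeftAdjoint.

Theorem theorem5p12 (S T : Spacetime) (f : S -> T) (f_shriek : T -> S) :
  geometric f -> left_adjoint f_shriek f ->
  (logical f <->
   forall (a : T) (b : S),
     f_shriek (f b ** nabla a) = b ** nabla (f_shriek a)).
Proof.
  intros Hgeom Hadj.
  rewrite <- (@preserves_st_impl_shriek_frobenius S T f f_shriek Hadj).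
  unfold logical, preserves_st_impl. tauto.
Qed.
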